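(* Let $S$ be an inverse semigroup whose semilattice of idempotents $\Sigma$ is a continuous poset. Then $S$ is a mirror semigroup if and only if, for every $\epsilon\in\Sigma$ and every pair of distinct elements $s,t\in H_\epsilon$, there exists $\varphi\in\Sigma$ with $\varphi \prec\!\!\!\prec \epsilon$ and $s\varphi\neq t\varphi$. In this case, $(S,\leqslant)$ is a continuous poset.
   Context: An inverse semigroup is a semigroup $S$ in which every $s$ has a unique $s^*$ with $ss^*s=s$ and $s^*ss^*=s^*$. $\Sigma=\Sigma(S)$ is the set of idempotents. The intrinsic order is $s\leqslant t$ iff $s=t\epsilon$ for some idempotent $\epsilon$. For $\epsilon\in\Sigma$, $H_\epsilon=\{s\in S : s^*s=\epsilon\}$. A subset is directed if nonempty and any two elements have an upper bound in it. $S$ is a mirror semigroup if every directed subset of $\Sigma$ having a supremum in $(\Sigma,\leqslant)$ also has a supremum in $(S,\leqslant)$. In a poset, $x$ is way-below $y$ if for every directed subset $D$ that has a supremum with $y\leqslant \sup D$, there is $d\in D$ with $x\leqslant d$; $\prec\!\!\!\prec$ denotes the way-below relation of the poset $(\Sigma,\leqslant)$. A poset is continuous if for every element $s$ the set of elements way-below $s$ is directed with supremum $s$. *)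

Definition directed {X : Type} (P : X -> Prop) (le : X -> X -> Prop)
  (D : X -> Prop) : Prop :=
  (forall d, D d -> P d) /\ (exists d, D d) /\
  (forall a b, D a -> D b -> exists c, D c /\ le a c /\ le b c).

Definition is_sup {X : Type} (P : X -> Prop) (le : X -> X -> Prop)
  (D : X -> Prop) (m : X) : Prop :=
  P m /\ (forall d, D d -> le d m) /\
  (forall u, P u -> (forall d, D d -> le d u) -> le m u).

Definition way_below {X : Type} (P : X -> Prop) (le : X -> X -> Prop)
  (x y : X) : Prop :=
  forall D : X -> Prop, directed P le D ->
  forall m, is_sup P le D m -> le y m -> exists d, D d /\ le x d.

Definition continuous_poset {X : Type} (P : X -> Prop) (le : X -> X -> Prop)
  : Prop :=
  forall s, P s ->
    directed P le (fun x => P x /\ way_below P le x s) /\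
    is_sup P le (fun x => P x /\ way_below P le x s) s.

Definition is_inverse {S : Type} (mul : S -> S -> S) (s u : S) : Prop :=
  mul (mul s u) s = s /\ mul (mul u s) u = u.

Record InverseSemigroup := {
  carrier :> Type;
  mul : carrier -> carrier -> carrier;
  mul_assoc : forall a b c, mul a (mul b c) = mul (mul a b) c;
  inverse_unique : forall s, exists! u, is_inverse mul s u
}.

Arguments mul {i}.

Section IS.
Variable S : InverseSemigroup.

Definition idem (e : S) : Prop := mul e e = e.

Definition ile (s t : S) : Prop := exists e, idem e /\ s = mul t e.

Definition H (eps : S) (s : S) : Prop :=
  exists u, is_inverse mul s u /\ mul u s = eps.

Definition mirror : Prop :=
  forall D : S -> Prop, directed idem ile D ->
  (exists m, is_sup idem ile D m) ->
  exists m, is_sup (fun _ => True) ile D m.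

End IS.

(* An element s lies below u as soon as s^* s <= s^* u, and if s phi = u phi for an
   idempotent phi <= s^* s then phi <= s^* u.  In a mirror semigroup the supremum s^* s of
   the idempotents way below it is still a supremum in S, so if s and u agree on all of
   them then s <= u.  For s, t in H_eps this forces s = t, and it makes s the supremum of
   the directed set {s phi | phi << s^* s}, whose members are way below s in S.
   Conversely, if u bounds a directed set D of idempotents with supremum eps, then u eps
   and eps both lie in H_eps and agree on every phi << eps, since such a phi lies below
   some d in D and u d = d; separation gives u eps = eps, i.e. eps <= u. *)

From Stdlib Require Import Classical ClassicalEpsilon.

Section InverseSemigroupFacts.
Variable S : InverseSemigroup.
Local Notation "a ** b" := (@mul S a b) (at level 40, left associativity).

Ltac assoc := repeat rewrite mul_assoc.
Ltac assoc_in H := repeat rewrite mul_assoc in H.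

Definition inv (s : S) : S :=
  proj1_sig (constructive_definite_description _ (inverse_unique S s)).

Lemma inv_spec s : is_inverse (@mul S) s (inv s).
Proof. unfold inv; destruct constructive_definite_description; assumption. Qed.

Lemma inv_unique s u : is_inverse (@mul S) s u -> u = inv s.
Proof.
  intro Hu; destruct (inverse_unique S s) as [x [_ Hx]].
  rewrite <- (Hx u Hu); apply Hx, inv_spec.
Qed.

Lemma mul_inv_mul s : s ** inv s ** s = s.
Proof. apply inv_spec. Qed.

Lemma mul_inv_mulA a s : a ** s ** inv s ** s = a ** s.
Proof. rewrite <- !mul_assoc, (mul_assoc S s), mul_inv_mul; reflexivity. Qed.

Lemma inv_mul_invA a s : a ** inv s ** s ** inv s = a ** inv s.
Proof.
  rewrite <- !mul_assoc, (mul_assoc S (inv s)).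
  rewrite (proj2 (inv_spec s)); reflexivity.
Qed.

Lemma idemA a e : idem S e -> a ** e ** e = a ** e.
Proof. intro He; rewrite <- mul_assoc, He; reflexivity. Qed.

Lemma inv_idem e : idem S e -> inv e = e.
Proof. intro He; symmetry; apply inv_unique; split; rewrite He; exact He. Qed.

Lemma idem_mul e f : idem S e -> idem S f -> idem S (e ** f).
Proof.
  intros He Hf.
  set (x := inv (e ** f)).
  destruct (inv_spec (e ** f)) as [X1 X2]; fold x in X1, X2.
  assoc_in X1; assoc_in X2.
  assert (X2A : forall a, a ** x ** e ** f ** x = a ** x).
  { intro a; transitivity (a ** (x ** e ** f ** x)); [assoc; reflexivity | rewrite X2; reflexivity]. }
  (* [f x e] is also an inverse of [e f]; hence [x = f x e] is idempotent and is its own inverse. *)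
  assert (Ex : f ** x ** e = x).
  { apply inv_unique; split; assoc.
    - rewrite (idemA e f Hf), (idemA (e ** f ** x) e He); exact X1.
    - rewrite (idemA (f ** x) e He), (idemA (f ** x ** e) f Hf), X2A; reflexivity. }
  assert (Xi : idem S x).
  { unfold idem; rewrite <- Ex; assoc; rewrite X2A; reflexivity. }
  assert (Eef : e ** f = x).
  { rewrite <- (inv_idem x Xi); apply inv_unique.
    destruct (inv_spec (e ** f)); split; assumption. }
  rewrite Eef; exact Xi.
Qed.

Lemma idem_comm e f : idem S e -> idem S f -> e ** f = f ** e.
Proof.
  intros He Hf.
  assert (Ief := idem_mul e f He Hf); assert (Ife := idem_mul f e Hf He).
  unfold idem in Ief, Ife; assoc_in Ief; assoc_in Ife.
  assert (Einv : f ** e = inv (e ** f)).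
  { apply inv_unique; split; assoc.
    - rewrite (idemA e f Hf), (idemA (e ** f) e He); exact Ief.
    - rewrite (idemA f e He), (idemA (f ** e) f Hf); exact Ife. }
  rewrite Einv, inv_idem by (apply idem_mul; assumption); reflexivity.
Qed.

Lemma idem_commA a e f : idem S e -> idem S f -> a ** e ** f = a ** f ** e.
Proof. intros He Hf; rewrite <- !mul_assoc, (idem_comm e f He Hf); reflexivity. Qed.

Lemma idem_inv_l s : idem S (inv s ** s).
Proof. unfold idem; assoc; apply mul_inv_mulA. Qed.

Lemma idem_inv_r s : idem S (s ** inv s).
Proof. unfold idem; assoc; rewrite mul_inv_mul; reflexivity. Qed.

Lemma inv_mul s t : inv (s ** t) = inv t ** inv s.
Proof.
  symmetry; apply inv_unique; split.
  - replace (s ** t ** (inv t ** inv s) ** (s ** t))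
      with (s ** (t ** inv t) ** (inv s ** s) ** t) by (assoc; reflexivity).
    rewrite (idem_commA s _ _ (idem_inv_r t) (idem_inv_l s)).
    assoc; rewrite mul_inv_mul; apply mul_inv_mulA.
  - replace (inv t ** inv s ** (s ** t) ** (inv t ** inv s))
      with (inv t ** (inv s ** s) ** (t ** inv t) ** inv s) by (assoc; reflexivity).
    rewrite (idem_commA (inv t) _ _ (idem_inv_l s) (idem_inv_r t)).
    assoc; rewrite (proj2 (inv_spec t)); apply inv_mul_invA.
Qed.

Lemma inv_mul_idem_r s g : idem S g -> inv (s ** g) ** (s ** g) = inv s ** s ** g.
Proof.
  intro Hg; rewrite inv_mul, (inv_idem g Hg).
  replace (g ** inv s ** (s ** g)) with (g ** (inv s ** s) ** g) by (assoc; reflexivity).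
  rewrite (idem_comm g _ Hg (idem_inv_l s)), idemA by exact Hg; reflexivity.
Qed.

Lemma H_iff eps s : H S eps s <-> inv s ** s = eps.
Proof.
  split.
  - intros [u [Hu <-]]; rewrite <- (inv_unique s u Hu); reflexivity.
  - intros <-; exists (inv s); split; [apply inv_spec | reflexivity].
Qed.

Lemma ile_refl s : ile S s s.
Proof. exists (inv s ** s); split; [apply idem_inv_l | assoc; rewrite mul_inv_mul; reflexivity]. Qed.

Lemma ile_trans s t u : ile S s t -> ile S t u -> ile S s u.
Proof.
  intros [e [He ->]] [f [Hf ->]].
  exists (f ** e); split; [apply idem_mul; assumption | assoc; reflexivity].
Qed.

Lemma ile_mul2l a s t : ile S s t -> ile S (a ** s) (a ** t).
Proof. intros [e [He ->]]; exists e; split; [exact He | assoc; reflexivity]. Qed.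

Lemma ile_eq s t : ile S s t -> s = t ** (inv s ** s).
Proof.
  intros [g [Hg ->]]; rewrite (inv_mul_idem_r t g Hg); assoc.
  rewrite mul_inv_mul; reflexivity.
Qed.

Lemma ile_inv_l s t : ile S s t -> ile S (inv s ** s) (inv t ** t).
Proof. intros [g [Hg ->]]; rewrite (inv_mul_idem_r t g Hg); exists g; auto. Qed.

Lemma ile_idem_l f y : idem S f -> ile S (f ** y) y.
Proof.
  intro Hf; exists (inv y ** f ** y); split.
  - unfold idem.
    replace (inv y ** f ** y ** (inv y ** f ** y))
      with (inv y ** f ** (y ** inv y) ** f ** y) by (assoc; reflexivity).
    rewrite (idem_commA (inv y) f _ Hf (idem_inv_r y)).
    assoc; rewrite (proj2 (inv_spec y)), idemA by exact Hf; reflexivity.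
  - replace (y ** (inv y ** f ** y)) with (y ** inv y ** f ** y) by (assoc; reflexivity).
    rewrite (idem_comm _ f (idem_inv_r y) Hf); assoc; rewrite mul_inv_mulA; reflexivity.
Qed.

Lemma idem_ile e s : idem S e -> ile S s e -> idem S s.
Proof. intros He [g [Hg ->]]; apply idem_mul; assumption. Qed.

Lemma ile_idemE e u : idem S e -> ile S e u <-> u ** e = e.
Proof.
  intro He; split.
  - intro Heu; pose proof (ile_eq e u Heu) as Ee.
    rewrite inv_idem, He in Ee by exact He.
    symmetry; exact Ee.
  - intro Eu; exists e; split; [exact He | symmetry; exact Eu].
Qed.

End InverseSemigroupFacts.

Section PosetFacts.
Context {X : Type} (P : X -> Prop) (le : X -> X -> Prop).
Hypothesis le_refl : forall x, le x x.
Hypothesis le_trans : forall x y z, le x y -> le y z -> le x z.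

Lemma way_below_le x y : P y -> way_below P le x y -> le x y.
Proof.
  intros Py Wxy.
  destruct (Wxy (fun z => z = y)) with y as [d [-> Hxd]]; auto.
  - repeat split; [intros d -> | exists y | intros a b -> ->; exists y]; auto.
  - repeat split; [auto | intros d -> | intros u _ Hu]; auto.
Qed.

Lemma directed_image {Y : Type} (Q : Y -> Prop) (le' : Y -> Y -> Prop)
    (f : X -> Y) (D : X -> Prop) :
  (forall x, D x -> Q (f x)) ->
  (forall x y, D x -> D y -> le x y -> le' (f x) (f y)) ->
  directed P le D -> directed Q le' (fun y => exists x, D x /\ y = f x).
Proof.
  intros HQ Hf [_ [[x0 D0] Hup]]; repeat split.
  - intros y [x [Dx ->]]; auto.
  - exists (f x0), x0; auto.
  - intros a b [x [Dx ->]] [y [Dy ->]].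
    destruct (Hup x y Dx Dy) as [z [Dz [Hxz Hyz]]].
    exists (f z); split; [exists z; auto | split; auto].
Qed.

Lemma way_below_directed_sup s (D : X -> Prop) :
  P s -> directed P le D -> is_sup P le D s ->
  (forall d, D d -> way_below P le d s) ->
  directed P le (fun x => P x /\ way_below P le x s) /\
  is_sup P le (fun x => P x /\ way_below P le x s) s.
Proof.
  intros Ps HD Hsup Wb.
  pose proof HD as [DP [[d0 D0] Hup]]; pose proof Hsup as [_ [Ub Least]].
  split; [repeat split | repeat split].
  - intros x [Px _]; exact Px.
  - exists d0; split; auto.
  - intros x y [_ Wx] [_ Wy].
    destruct (Wx D HD s Hsup (le_refl s)) as [dx [Dx Hx]].
    destruct (Wy D HD s Hsup (le_refl s)) as [dy [Dy Hy]].
    destruct (Hup dx dy Dx Dy) as [d [Dd [Hxd Hyd]]].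
    exists d; split; [split; auto | split; eauto].
  - exact Ps.
  - intros x [_ Wx]; apply way_below_le; assumption.
  - intros u Pu Hu; apply Least; auto.
Qed.

End PosetFacts.

Section MirrorSemigroups.
Variable S : InverseSemigroup.
Local Notation "a ** b" := (@mul S a b) (at level 40, left associativity).
Local Notation inv := (inv S).

Ltac assoc := repeat rewrite mul_assoc.

Definition way_below_separated : Prop :=
  forall eps : S, idem S eps ->
  forall s t : S, H S eps s -> H S eps t -> s <> t ->
  exists phi : S, idem S phi /\ way_below (idem S) (ile S) phi eps /\ s ** phi <> t ** phi.

Lemma idem_mul_way_below eps phi :
  idem S eps -> idem S phi -> way_below (idem S) (ile S) phi eps -> eps ** phi = phi.
Proof.
  intros Ie Ip Wp; apply ile_idemE; [exact Ip |].
  apply (way_below_le (idem S) _ (ile_refl S)); assumption.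
Qed.

Lemma ile_of_ile_inv_l s t : ile S (inv s ** s) (inv s ** t) -> ile S s t.
Proof.
  intro Hst; apply (ile_idemE S _ _ (idem_inv_l S s)) in Hst.
  assert (Es : s = s ** inv s ** (t ** (inv s ** s))).
  { transitivity (s ** (inv s ** t ** (inv s ** s))); [| assoc; reflexivity].
    rewrite Hst; assoc; rewrite mul_inv_mul; reflexivity. }
  rewrite Es; apply ile_trans with (t ** (inv s ** s)).
  - apply ile_idem_l, idem_inv_r.
  - exists (inv s ** s); split; [apply idem_inv_l | reflexivity].
Qed.

Lemma is_sup_inv_l (D : S -> Prop) m :
  is_sup (fun _ => True) (ile S) D m ->
  is_sup (idem S) (ile S) (fun e => exists d, D d /\ e = inv d ** d) (inv m ** m).
Proof.
  intros [_ [Ub Least]]; repeat split.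
  - apply idem_inv_l.
  - intros e [d [Dd ->]]; apply ile_inv_l, Ub, Dd.
  - intros f If Hf.
    assert (Hm : ile S m (m ** f)).
    { apply Least; [exact I |]; intros d Dd.
      assert (Efd : f ** (inv d ** d) = inv d ** d).
      { apply ile_idemE; [apply idem_inv_l | apply Hf; exists d; auto]. }
      rewrite (ile_eq S d m (Ub d Dd)), <- Efd.
      exists (inv d ** d); split; [apply idem_inv_l | assoc; reflexivity]. }
    apply ile_inv_l in Hm; rewrite (inv_mul_idem_r S m f If) in Hm.
    apply ile_trans with (inv m ** m ** f); [exact Hm | apply ile_idem_l, idem_inv_l].
Qed.

Lemma mirror_is_sup (Hm : mirror S) (D : S -> Prop) eps :
  directed (idem S) (ile S) D -> is_sup (idem S) (ile S) D eps ->
  is_sup (fun _ => True) (ile S) D eps.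
Proof.
  intros HD Hsup; pose proof Hsup as [Ie [Ub Least]].
  destruct (Hm D HD (ex_intro _ eps Hsup)) as [m [_ [Ubm Leastm]]].
  assert (Hme : ile S m eps) by (apply Leastm; auto).
  assert (Hem : ile S eps m) by (apply Least; [apply (idem_ile S eps); assumption | exact Ubm]).
  repeat split; [exact Ub |].
  intros u _ Hu; apply ile_trans with m; auto.
Qed.

Lemma way_below_mul_idem s phi :
  idem S phi -> way_below (idem S) (ile S) phi (inv s ** s) ->
  way_below (fun _ => True) (ile S) (s ** phi) s.
Proof.
  intros Ip Wp D HD m Hsup Hsm.
  pose proof Hsup as [_ [Ub _]].
  assert (HE : directed (idem S) (ile S) (fun e => exists d, D d /\ e = inv d ** d)).
  { apply (directed_image (fun _ => True) (ile S)); auto.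
    - intros; apply idem_inv_l.
    - intros; apply ile_inv_l; assumption. }
  destruct (Wp _ HE _ (is_sup_inv_l D m Hsup) (ile_inv_l S s m Hsm))
    as [e [[d [Dd ->]] Hpd]].
  exists d; split; [exact Dd |].
  apply (ile_idemE S _ _ Ip) in Hpd.
  exists phi; split; [exact Ip |].
  rewrite (ile_eq S s m Hsm), (ile_eq S d m (Ub d Dd)).
  rewrite <- mul_assoc, (idem_mul_way_below _ phi (idem_inv_l S s) Ip Wp).
  rewrite <- mul_assoc, Hpd; reflexivity.
Qed.

Lemma ile_of_way_below_agree (Hc : continuous_poset (idem S) (ile S)) (Hm : mirror S) s u :
  (forall phi, idem S phi -> way_below (idem S) (ile S) phi (inv s ** s) -> s ** phi = u ** phi) ->
  ile S s u.
Proof.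
  intro Hagree; apply ile_of_ile_inv_l.
  destruct (Hc _ (idem_inv_l S s)) as [Hdir Hsup].
  destruct (mirror_is_sup Hm _ _ Hdir Hsup) as [_ [_ Least]].
  apply Least; [exact I |]; intros phi [Ip Wp].
  apply ile_idemE; [exact Ip |].
  rewrite <- mul_assoc, <- Hagree by assumption; rewrite mul_assoc.
  apply idem_mul_way_below; [apply idem_inv_l | exact Ip | exact Wp].
Qed.

Lemma mirror_of_way_below_separated : way_below_separated -> mirror S.
Proof.
  intros Hsep D HD [eps Hsup]; exists eps.
  pose proof Hsup as [Ie [Ub Least]].
  repeat split; [exact Ub |]; intros u _ Hu.
  assert (Hdu : forall d, D d -> u ** d = d)
    by (intros d Dd; apply ile_idemE; [apply (proj1 HD) | apply Hu]; exact Dd).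
  assert (Heu : ile S eps (inv u ** u)).
  { apply Least; [apply idem_inv_l |]; intros d Dd.
    pose proof (ile_inv_l S d u (Hu d Dd)) as Hd.
    rewrite inv_idem, (proj1 HD d Dd) in Hd by exact (proj1 HD d Dd); exact Hd. }
  apply ile_idemE; [exact Ie |].
  apply NNPP; intro Hne.
  destruct (Hsep eps Ie (u ** eps) eps) as [phi [Ip [Wp Hphi]]]; [| | exact Hne |].
  - apply H_iff; rewrite inv_mul_idem_r by exact Ie; apply ile_idemE; assumption.
  - apply H_iff; rewrite inv_idem by exact Ie; exact Ie.
  - destruct (Wp D HD eps Hsup (ile_refl S eps)) as [d [Dd Hpd]].
    apply ile_idemE in Hpd; [| exact Ip].
    apply Hphi; rewrite <- mul_assoc, (idem_mul_way_below eps phi Ie Ip Wp), <- Hpd, mul_assoc, Hdu, Hpd by exact Dd; reflexivity.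
Qed.

Lemma way_below_separated_of_mirror :
  continuous_poset (idem S) (ile S) -> mirror S -> way_below_separated.
Proof.
  intros Hc Hm eps Ie s t Hs Ht Hst; apply H_iff in Hs, Ht.
  apply NNPP; intro Hn; apply Hst.
  assert (Hle : ile S s t).
  { apply (ile_of_way_below_agree Hc Hm); intros phi Ip Wp.
    apply NNPP; intro Hne; apply Hn; exists phi; rewrite <- Hs; auto. }
  rewrite (ile_eq S s t Hle), Hs, <- Ht, mul_assoc; apply mul_inv_mul.
Qed.

Lemma continuous_of_mirror :
  continuous_poset (idem S) (ile S) -> mirror S ->
  continuous_poset (fun _ : S => True) (ile S).
Proof.
  intros Hc Hm s _.
  destruct (Hc _ (idem_inv_l S s)) as [Hdir Hsup].
  set (Ws := fun phi => idem S phi /\ way_below (idem S) (ile S) phi (inv s ** s)).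
  apply (way_below_directed_sup _ _ (ile_refl S) (ile_trans S) s
           (fun x => exists phi, Ws phi /\ x = s ** phi)); [exact I | | |].
  - apply (directed_image (idem S) (ile S)); auto; intros; apply ile_mul2l; assumption.
  - repeat split.
    + intros x [phi [[Ip _] ->]]; exists phi; auto.
    + intros u _ Hu; apply (ile_of_way_below_agree Hc Hm); intros phi Ip Wp.
      rewrite (ile_eq S (s ** phi) u) at 1 by (apply Hu; exists phi; split; [split |]; auto).
      rewrite inv_mul_idem_r, (idem_mul_way_below _ phi (idem_inv_l S s) Ip Wp) by exact Ip.
      reflexivity.
  - intros x [phi [[Ip Wp] ->]]; apply way_below_mul_idem; assumption.
Qed.

End MirrorSemigroups.

Theorem theorem5p5 (S : InverseSemigroup) :
  continuous_poset (idem S) (ile S) ->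
  (mirror S <->
   (forall eps : S, idem S eps ->
    forall s t : S, H S eps s -> H S eps t -> s <> t ->
    exists phi : S, idem S phi /\ way_below (idem S) (ile S) phi eps /\
                    mul s phi <> mul t phi)) /\
  (mirror S -> continuous_poset (fun _ : S => True) (ile S)).
Proof.
  intro Hc; split.
  - split; [apply way_below_separated_of_mirror, Hc | apply mirror_of_way_below_separated].
  - apply continuous_of_mirror, Hc.
Qed.
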